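(* Let $(\mathfrak{g},[-,-],d_\mathfrak{g},\vartheta)$ be a curved Lie algebra. Its curved universal enveloping algebra (the value at $\mathfrak{g}$ of the left adjoint $\mathfrak{U}$ of the skew-symmetrization functor $\mathrm{Skew}$ from curved associative algebras to curved Lie algebras) is isomorphic to $$\mathfrak{U}(\mathfrak{g})\cong\overline{T}(\mathfrak{g})/\big(x\otimes y-(-1)^{|x||y|}y\otimes x-[x,y]\big),$$ where $\overline{T}(\mathfrak{g})$ is the non-unital tensor algebra on $\mathfrak{g}$ and the quotient is by the two-sided ideal generated by these elements, with pre-differential induced by the derivation extending $d_\mathfrak{g}$ and with curvature the image of $\vartheta$ under $\mathfrak{g}\hookrightarrow\mathfrak{U}(\mathfrak{g})$.
   Context: Ground field $\mathbb{K}$ of characteristic $0$, graded modules with Koszul signs. A curved Lie algebra is a graded Lie algebra $(\mathfrak{g},[-,-])$ with a degree $-1$ derivation $d_\mathfrak{g}$ and $\vartheta\in\mathfrak{g}_{-2}$ with $d_\mathfrak{g}^2=[\vartheta,-]$ and $d_\mathfrak{g}\vartheta=0$. A curved associative algebra is a non-unital graded associative algebra $(A,\mu_A)$ with a degree $-1$ derivation $d_A$ and $\vartheta\in A_{-2}$ with $d_A^2=\mu_A(\vartheta,-)-\mu_A(-,\vartheta)$ and $d_A\vartheta=0$. Morphisms in both categories commute with structure, pre-differentials and curvatures. $\mathrm{Skew}$ sends $(A,\mu_A,d_A,\vartheta)$ to $(A,\mu_A-\mu_A^{(12)},d_A,\vartheta)$, i.e. $[x,y]=\mu_A(x,y)-(-1)^{|x||y|}\mu_A(y,x)$.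 *)

From HB Require Import structures.
From mathcomp Require Import all_boot all_order all_algebra.
Set Implicit Arguments. Unset Strict Implicit. Unset Printing Implicit Defensive.
Import Order.TTheory GRing.Theory Num.Theory.
Local Open Scope ring_scope.

Section Graded.
Variable K : fieldType.

(* Z-graded vector space: a single K-vector space V together with the
   homogeneous-component predicates hom n (V_n), forming an internal direct
   sum V = (+)_n V_n. *)
Definition is_graded (V : lmodType K) (hom : int -> V -> Prop) : Prop :=
  (forall n, hom n 0) /\
  (forall n (a : K) (u v : V), hom n u -> hom n v -> hom n (a *: u + v)) /\
  (forall v : V, exists (s : seq int) (c : int -> V),
       uniq s /\ (forall n, hom n (c n)) /\ v = \sum_(n <- s) c n) /\
  (forall (s : seq int) (c : int -> V), uniq s -> (forall n, hom n (c n)) ->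
       \sum_(n <- s) c n = 0 -> forall n, n \in s -> c n = 0).

Record gmod := GMod {
  gcar :> lmodType K;
  hom : int -> gcar -> Prop;
  hom_graded : is_graded hom }.

Definition ks (m n : int) : K := (-1) ^+ (absz (m * n)).

Definition is_lin (V W : lmodType K) (f : V -> W) : Prop :=
  forall (a : K) (u v : V), f (a *: u + v) = a *: f u + f v.

Definition is_bilin (V W : lmodType K) (b : V -> V -> W) : Prop :=
  (forall z, is_lin (b ^~ z)) /\ (forall x, is_lin (b x)).

Definition deg_map (V W : gmod) (k : int) (f : V -> W) : Prop :=
  is_lin f /\ forall n x, hom n x -> hom (n + k) (f x).

Definition is_curved_lie (g : gmod) (br : g -> g -> g) (d : g -> g)
    (th : g) : Prop :=
  is_bilin br /\
  (forall m n x y, hom m x -> hom n y -> hom (m + n) (br x y)) /\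
  (forall m n x y, hom m x -> hom n y -> br x y = - (ks m n *: br y x)) /\
  (forall m n p x y z, hom m x -> hom n y -> hom p z ->
      ks m p *: br x (br y z) + ks n m *: br y (br z x)
      + ks p n *: br z (br x y) = 0) /\
  deg_map (-1) d /\
  (forall m x y, hom m x ->
      d (br x y) = br (d x) y + (-1) ^+ (absz m) *: br x (d y)) /\
  hom (-2) th /\
  (forall x, d (d x) = br th x) /\
  d th = 0.

Record curved_lie (g : gmod) := CLie {
  lbr : g -> g -> g;
  ld : g -> g;
  lth : g;
  lax : is_curved_lie lbr ld lth }.

Definition is_gassoc (A : gmod) (mu : A -> A -> A) : Prop :=
  is_bilin mu /\
  (forall m n x y, hom m x -> hom n y -> hom (m + n) (mu x y)) /\
  (forall x y z, mu (mu x y) z = mu x (mu y z)).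

Definition is_curved_assoc (A : gmod) (mu : A -> A -> A) (d : A -> A)
    (th : A) : Prop :=
  is_gassoc mu /\
  deg_map (-1) d /\
  (forall m x y, hom m x ->
      d (mu x y) = mu (d x) y + (-1) ^+ (absz m) *: mu x (d y)) /\
  hom (-2) th /\
  (forall x, d (d x) = mu th x - mu x th) /\
  d th = 0.

Definition is_alg_morph (A B : gmod) (muA : A -> A -> A) (muB : B -> B -> B)
    (h : A -> B) : Prop :=
  deg_map 0 h /\ forall x y, h (muA x y) = muB (h x) (h y).

Definition is_curved_assoc_morph (A B : gmod)
    (muA : A -> A -> A) (dA : A -> A) (thA : A)
    (muB : B -> B -> B) (dB : B -> B) (thB : B) (h : A -> B) : Prop :=
  is_alg_morph muA muB h /\ (forall x, h (dA x) = dB (h x)) /\ h thA = thB.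

Definition skew_br (A : gmod) (mu : A -> A -> A) (m n : int) (x y : A) : A :=
  mu x y - ks m n *: mu y x.

(* f : g -> Skew(A) is a morphism of graded Lie algebras (the bracket
   condition is imposed on homogeneous elements; by bilinearity this is the
   condition f [x,y] = [f x, f y]_Skew for all x y). *)
Definition is_lie_morph_to_skew (g : gmod) (br : g -> g -> g)
    (A : gmod) (mu : A -> A -> A) (f : g -> A) : Prop :=
  deg_map 0 f /\
  forall m n x y, hom m x -> hom n y -> f (br x y) = skew_br mu m n (f x) (f y).

Definition is_curved_lie_morph_to_skew (g : gmod) (L : curved_lie g)
    (A : gmod) (mu : A -> A -> A) (dA : A -> A) (thA : A) (f : g -> A) : Prop :=
  is_lie_morph_to_skew (lbr L) mu f /\
  (forall x, f (ld L x) = dA (f x)) /\ f (lth L) = thA.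

(* (B, muB, iota) is the non-unital graded associative algebra
     Tbar(g) / ( x (x) y - (-1)^{|x||y|} y (x) x - [x,y] ),
   characterised by the universal property of this presentation:
   iota : g -> B is a degree-0 linear map satisfying the relations, and every
   degree-0 linear map f : g -> A into a graded associative algebra satisfying
   the relations factors uniquely through iota by an algebra morphism. *)
Definition presents_Tbar_quotient (g : gmod) (L : curved_lie g)
    (B : gmod) (muB : B -> B -> B) (iota : g -> B) : Prop :=
  is_gassoc muB /\ is_lie_morph_to_skew (lbr L) muB iota /\
  forall (A : gmod) (muA : A -> A -> A), is_gassoc muA ->
  forall f : g -> A, is_lie_morph_to_skew (lbr L) muA f ->
    (exists h : B -> A, is_alg_morph muB muA h /\ forall x, h (iota x) = f x) /\
    (forall h1 h2 : B -> A, is_alg_morph muB muA h1 -> is_alg_morph muB muA h2 ->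
       (forall x, h1 (iota x) = f x) -> (forall x, h2 (iota x) = f x) ->
       forall b, h1 b = h2 b).

(* (B, muB, dB, thB) with iota is a universal arrow from g to the functor
   Skew, i.e. it is (isomorphic to) the value at g of the left adjoint U. *)
Definition universal_arrow_to_Skew (g : gmod) (L : curved_lie g)
    (B : gmod) (muB : B -> B -> B) (dB : B -> B) (thB : B) (iota : g -> B)
    : Prop :=
  is_curved_assoc muB dB thB /\
  is_curved_lie_morph_to_skew L muB dB thB iota /\
  forall (A : gmod) (muA : A -> A -> A) (dA : A -> A) (thA : A),
    is_curved_assoc muA dA thA ->
  forall f : g -> A, is_curved_lie_morph_to_skew L muA dA thA f ->
    (exists h : B -> A, is_curved_assoc_morph muB dB thB muA dA thA h /\
                        forall x, h (iota x) = f x) /\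
    (forall h1 h2 : B -> A,
       is_curved_assoc_morph muB dB thB muA dA thA h1 ->
       is_curved_assoc_morph muB dB thB muA dA thA h2 ->
       (forall x, h1 (iota x) = f x) -> (forall x, h2 (iota x) = f x) ->
       forall b, h1 b = h2 b).

End Graded.

(* B is known only through its universal property, so every extra structure
   on it is produced, and compared, through algebra morphisms into
   square-zero extensions: on C (+) C[k] with product
   (x, x') (y, y') = (x y, x' y + S(x) y'), the map a |-> (h a, D a) is an
   algebra morphism exactly when D is a degree-k derivation along h, twisted
   by S. Hence the derivation d_g extends to a derivation d_B of B (S being
   the parity operator), and two derivations along h that agree on g are
   equal. The latter gives d_B^2 = [iota theta, -], as both sides are even
   derivations and d_g^2 = [theta, -], and h o d_B = d_A o h for the morphism
   h induced by a curved Lie morphism g -> Skew(A). *)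

From Pilot Require Import Defs.
From HB Require Import structures.
From mathcomp Require Import all_boot all_order all_algebra.
From Stdlib Require Import ClassicalEpsilon.
Import GRing.Theory.
Set Implicit Arguments. Unset Strict Implicit. Unset Printing Implicit Defensive.
Local Open Scope ring_scope.

Local Notation hom := Defs.hom.

Section Signs.
Variable K : fieldType.

Definition sgn (z : int) : K := (-1) ^+ absz z.

Lemma sgnD a b : sgn (a + b) = sgn a * sgn b.
Proof.
have sgnE z : sgn z = (-1) ^ z by case: z => n //=; rewrite /sgn /= -invr_sign.
by rewrite !sgnE exprzDr ?unitrN1.
Qed.

Lemma sgnN a : sgn (- a) = sgn a.
Proof. by rewrite /sgn abszN. Qed.

Lemma sgn_mul_self a : sgn a * sgn a = 1.
Proof. by rewrite /sgn -exprD addnn -mul2n exprM sqrrN !expr1n. Qed.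

Lemma sgn_pred a : sgn (a - 1) = - sgn a.
Proof. by rewrite sgnD sgnN /sgn expr1 mulrN1. Qed.

Lemma ks_predl m n : ks K (m - 1) n = ks K m n * sgn n.
Proof. by rewrite /ks -!/(sgn _) mulrBl mul1r sgnD sgnN. Qed.

Lemma ks_predr m n : sgn m * ks K m (n - 1) = ks K m n.
Proof. by rewrite /ks -!/(sgn _) mulrBr mulr1 sgnD sgnN mulrCA sgn_mul_self mulr1. Qed.

Lemma ks_N2l n : ks K (-2) n = 1.
Proof. by rewrite /ks -!/(sgn _) mulNr sgnN mulr2n mulrDl sgnD sgn_mul_self. Qed.

End Signs.

Section LinearMaps.
Variable K : fieldType.

Section Lin.
Variables (V W : lmodType K) (F : V -> W).
Hypothesis Flin : is_lin F.

Lemma lin0 : F 0 = 0.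
Proof. by have := Flin 1 0 0; rewrite !scale1r addr0 -{1}[F 0]addr0 => /addrI/esym. Qed.

Lemma linD u v : F (u + v) = F u + F v.
Proof. by have := Flin 1 u v; rewrite !scale1r. Qed.

Lemma linZ a u : F (a *: u) = a *: F u.
Proof. by have := Flin a u 0; rewrite !addr0 lin0 addr0. Qed.

Lemma linN u : F (- u) = - F u.
Proof. by rewrite -scaleN1r linZ scaleN1r. Qed.

Lemma linB u v : F (u - v) = F u - F v.
Proof. by rewrite linD linN. Qed.

Lemma lin_sum (I : Type) (s : seq I) (c : I -> V) :
  F (\sum_(i <- s) c i) = \sum_(i <- s) F (c i).
Proof. by elim: s => [|i s IH]; rewrite ?big_nil ?lin0 // !big_cons linD IH. Qed.

End Lin.

Lemma is_lin_comp (U V W : lmodType K) (F : V -> W) (G : U -> V) :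
  is_lin F -> is_lin G -> is_lin (F \o G).
Proof. by move=> Flin Glin a u v /=; rewrite Glin Flin. Qed.

Lemma is_lin_add (V W : lmodType K) (F G : V -> W) :
  is_lin F -> is_lin G -> is_lin (fun x => F x + G x).
Proof. by move=> Flin Glin a u v; rewrite Flin Glin scalerDr addrACA. Qed.

Lemma is_lin_sub (V W : lmodType K) (F G : V -> W) :
  is_lin F -> is_lin G -> is_lin (fun x => F x - G x).
Proof. by move=> Flin Glin a u v; rewrite Flin Glin scalerBr opprD addrACA. Qed.

End LinearMaps.

Lemma undup_catl (T : eqType) (s s' : seq T) : {subset s <= undup (s ++ s')}.
Proof. by move=> x sx; rewrite mem_undup mem_cat sx. Qed.

Lemma undup_catr (T : eqType) (s s' : seq T) : {subset s' <= undup (s ++ s')}.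
Proof. by move=> x sx; rewrite mem_undup mem_cat sx orbT. Qed.

Section GradedModules.
Variables (K : fieldType) (V : gmod K).

Lemma hom0 n : hom n (0 : V).
Proof. by case: (hom_graded V). Qed.

Lemma homL n a (u v : V) : hom n u -> hom n v -> hom n (a *: u + v).
Proof. by case: (hom_graded V) => _ [hL _]; apply: hL. Qed.

Lemma homZ n a (u : V) : hom n u -> hom n (a *: u).
Proof. by move=> hu; rewrite -[_ *: _]addr0; apply: homL hu (hom0 n). Qed.

Lemma homD n (u v : V) : hom n u -> hom n v -> hom n (u + v).
Proof. by move=> hu hv; rewrite -[u]scale1r; apply: homL. Qed.

Lemma homB n (u v : V) : hom n u -> hom n v -> hom n (u - v).
Proof. by move=> hu hv; rewrite addrC -scaleN1r; apply: homL. Qed.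

Definition is_dec (v : V) (s : seq int) (c : int -> V) :=
  [/\ uniq s, forall n, hom n (c n) & v = \sum_(n <- s) c n].

Lemma dec_exists (v : V) : exists sc : seq int * (int -> V), is_dec v sc.1 sc.2.
Proof.
by case: (hom_graded V) => _ [_ [/(_ v) [s [c [? [? ?]]]] _]]; exists (s, c).
Qed.

Lemma hom_sum_eq0 (s : seq int) (c : int -> V) : uniq s -> (forall n, hom n (c n)) ->
  \sum_(n <- s) c n = 0 -> forall n, n \in s -> c n = 0.
Proof. by case: (hom_graded V) => _ [_ [_ h0]]; apply: h0. Qed.

Lemma eq_lin_hom (W : lmodType K) (F G : V -> W) : is_lin F -> is_lin G ->
  (forall m x, hom m x -> F x = G x) -> forall v, F v = G v.
Proof.
move=> Flin Glin eqFG v; have [[s c] [_ hc ->]] := dec_exists v.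
by rewrite !lin_sum //; apply: eq_bigr => n _; apply: eqFG (hc n).
Qed.

(* Extending by zero lets decompositions over different index lists be
   compared on a common one. *)
Definition dec_ext (s : seq int) (c : int -> V) n := if n \in s then c n else 0.

Lemma hom_dec_ext s c : (forall n, hom n (c n)) -> forall n, hom n (dec_ext s c n).
Proof. by move=> hc n; rewrite /dec_ext; case: ifP => _; [apply: hc | apply: hom0]. Qed.

Lemma big_dec_ext (W : nmodType) (G : int -> V -> W) (s u : seq int) c :
  (forall n, G n 0 = 0) -> uniq s -> uniq u -> {subset s <= u} ->
  \sum_(n <- s) G n (c n) = \sum_(n <- u) G n (dec_ext s c n).
Proof.
move=> G0 us uu su; under [RHS]eq_bigr => n _ do rewrite /dec_ext fun_if G0.
rewrite -big_mkcond -big_filter; apply: perm_big; apply: uniq_perm => //.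
  exact: filter_uniq.
by move=> n; rewrite mem_filter; case sn: (n \in s); rewrite //= su.
Qed.

Lemma sum_dec_ext (s u : seq int) c : uniq s -> uniq u -> {subset s <= u} ->
  \sum_(n <- s) c n = \sum_(n <- u) dec_ext s c n.
Proof. exact: (big_dec_ext (G := fun _ x => x)). Qed.

Lemma sum_scale_dec_ext (f : int -> K) (s u : seq int) c :
  uniq s -> uniq u -> {subset s <= u} ->
  \sum_(n <- s) f n *: c n = \sum_(n <- u) f n *: dec_ext s c n.
Proof. by apply: (big_dec_ext (G := fun n x => f n *: x)) => n; rewrite scaler0. Qed.

Lemma dec_ext_uniq v s c s' c' : is_dec v s c -> is_dec v s' c' ->
  dec_ext s c =1 dec_ext s' c'.
Proof.
move=> [us hc ev] [us' hc' ev'] n; set u := undup (s ++ s').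
have uu : uniq u := undup_uniq _.
have [nu|nu] := boolP (n \in u); last first.
  rewrite /dec_ext (ifN _ _ (contra (@undup_catl _ s s' n) nu)).
  by rewrite (ifN _ _ (contra (@undup_catr _ s s' n) nu)).
apply/eqP; rewrite -subr_eq0; apply/eqP; move: n nu.
apply: (hom_sum_eq0 uu) => [n|]; first by apply: homB; apply: hom_dec_ext.
rewrite sumrB -(sum_dec_ext _ us uu (@undup_catl _ s s')).
by rewrite -(sum_dec_ext _ us' uu (@undup_catr _ s s')) -ev -ev' subrr.
Qed.

Definition dec (v : V) := proj1_sig (constructive_indefinite_description _ (dec_exists v)).

Lemma decP v : is_dec v (dec v).1 (dec v).2.
Proof. exact: proj2_sig (constructive_indefinite_description _ (dec_exists v)). Qed.

Definition grade_scale (f : int -> K) (v : V) : V :=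
  \sum_(n <- (dec v).1) f n *: (dec v).2 n.

Lemma grade_scale_dec f v s c : is_dec v s c ->
  grade_scale f v = \sum_(n <- s) f n *: c n.
Proof.
move=> dv; have [us _ _] := dv; have [us' _ _] := decP v.
set u := undup ((dec v).1 ++ s); have uu : uniq u := undup_uniq _.
rewrite /grade_scale (sum_scale_dec_ext _ _ us' uu (@undup_catl _ _ s)).
rewrite (sum_scale_dec_ext _ _ us uu (@undup_catr _ (dec v).1 s)).
by apply: eq_bigr => n _; rewrite (dec_ext_uniq (decP v) dv).
Qed.

Lemma grade_scale_lin f : is_lin (grade_scale f).
Proof.
move=> a x y; case: (dec_exists x) (dec_exists y) => [[sx cx] /= dx] [[sy cy] /= dy].
have [usx hcx ex] := dx; have [usy hcy ey] := dy.
set u := undup (sx ++ sy); have uu : uniq u := undup_uniq _.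
have sux := @undup_catl _ sx sy; have suy := @undup_catr _ sx sy.
have dxy : is_dec (a *: x + y) u (fun n => a *: dec_ext sx cx n + dec_ext sy cy n).
  split=> // [n|]; first by apply: homL; apply: hom_dec_ext.
  by rewrite big_split /= -scaler_sumr -!sum_dec_ext // -ex -ey.
rewrite (grade_scale_dec f dxy) (grade_scale_dec f dx) (grade_scale_dec f dy).
rewrite (sum_scale_dec_ext _ _ usx uu sux) (sum_scale_dec_ext _ _ usy uu suy).
rewrite scaler_sumr -big_split; apply: eq_bigr => n _.
by rewrite scalerDr !scalerA mulrC.
Qed.

Lemma grade_scale_hom f m x : hom m x -> grade_scale f x = f m *: x.
Proof.
move=> hx; have dx : is_dec x [:: m] (fun n => if n == m then x else 0).
  by split=> [||]; rewrite ?big_seq1 ?eqxx // => n; case: eqP => [->|_] //; apply: hom0.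
by rewrite (grade_scale_dec f dx) big_seq1 eqxx.
Qed.

Definition parity : V -> V := grade_scale (@sgn K).

Lemma parity_lin : is_lin parity.
Proof. exact: grade_scale_lin. Qed.

Lemma parity_hom m x : hom m x -> parity x = sgn K m *: x.
Proof. exact: grade_scale_hom. Qed.

End GradedModules.

Arguments parity {K} V.
Arguments parity_lin {K} V.

Section SquareZeroExtension.
Variables (K : fieldType) (B : gmod K) (k : int).

Definition sqz_hom n (p : B * B) := hom n p.1 /\ hom (n + k) p.2.

Lemma sum_shift (W : nmodType) (s : seq int) (F : int -> W) :
  \sum_(n <- s) F (n + k) = \sum_(m <- map (+%R^~ k) s) F m.
Proof. by rewrite big_map. Qed.

Lemma uniq_shift (s : seq int) : uniq s -> uniq (map (+%R^~ k) s).
Proof. by move=> us; rewrite map_inj_uniq // => x y /addIr. Qed.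

Lemma sqz_graded : is_graded sqz_hom.
Proof.
split; first by split; apply: hom0.
split; first by move=> n a u v [hu1 hu2] [hv1 hv2]; split; apply: homL.
split=> [[a b]|s c us hc sc0 n sn].
  have [[s1 c1] [us1 hc1 ->]] := dec_exists a.
  have [[s2 c2] [us2 hc2 ->]] := dec_exists b.
  set u := undup (s1 ++ map (+%R^~ (- k)) s2); have uu : uniq u := undup_uniq _.
  have su1 : {subset s1 <= u} := @undup_catl _ _ _.
  have su2 : {subset s2 <= map (+%R^~ k) u}.
    move=> n sn; apply/mapP; exists (n - k); last by rewrite subrK.
    exact/undup_catr/(map_f (+%R^~ (- k)) sn).
  exists u, (fun n => (dec_ext s1 c1 n, dec_ext s2 c2 (n + k))).
  split=> //; split=> [n|]; first by split; apply: hom_dec_ext.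
  rewrite [RHS]surjective_pairing (raddf_sum fst) (raddf_sum snd) /=; congr (_, _).
    exact: sum_dec_ext.
  by rewrite sum_shift; apply: sum_dec_ext => //; apply: uniq_shift.
have c1_0 : (c n).1 = 0.
  apply: (hom_sum_eq0 us (c := fun n => (c n).1)) => // [m|]; first by case: (hc m).
  by rewrite -(raddf_sum fst) sc0.
have c2_0 : (c n).2 = 0.
  have := hom_sum_eq0 (uniq_shift us) (c := fun m => (c (m - k)).2).
  rewrite -sum_shift; under eq_bigr do rewrite addrK.
  rewrite -(raddf_sum snd) sc0 => /(_ _ _ (n + k)); rewrite addrK; apply => //.
    by move=> m; case: (hc (m - k)); rewrite subrK.
  exact: map_f.
by case: (c n) c1_0 c2_0 => ? ? /= -> ->.
Qed.

Definition sqz : gmod K := GMod sqz_graded.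

Variables (mu : B -> B -> B) (S : B -> B).

Definition sqz_mul (p q : sqz) : sqz := (mu p.1 q.1, mu p.2 q.1 + mu (S p.1) q.2).

Lemma sqz_gassoc : is_gassoc mu -> is_alg_morph mu mu S -> is_gassoc sqz_mul.
Proof.
move=> [[muL muR] [mu_hom muA]] [[Slin S_hom] SM].
split; [split => [z|x] a u v | split => [m n p q [hp1 hp2] [hq1 hq2] | x y z]].
- apply: injective_projections => /=; first exact: muL.
  by rewrite Slin (muL z.1) (muL z.2) scalerDr addrACA.
- apply: injective_projections => /=; first exact: muR.
  by rewrite (muR x.2) (muR (S x.1)) scalerDr addrACA.
- split; first exact: mu_hom.
  apply: homD; first by rewrite addrAC; apply: mu_hom.
  by rewrite -addrA; apply: mu_hom => //; rewrite -[m]addr0; apply: S_hom.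
- apply: injective_projections => /=; first exact: muA.
  by rewrite (linD (muL _)) (linD (muR _)) !muA SM !muA addrA.
Qed.

End SquareZeroExtension.

Section AlgebraMorphisms.
Variable K : fieldType.

Lemma alg_morph_id (A : gmod K) (mu : A -> A -> A) : is_alg_morph mu mu id.
Proof. by split=> //; split=> // n x; rewrite addr0. Qed.

Lemma alg_morph_comp_lie (g : gmod K) (br : g -> g -> g) (B A : gmod K)
    (muB : B -> B -> B) (muA : A -> A -> A) (f : g -> B) (h : B -> A) :
  is_alg_morph muB muA h -> is_lie_morph_to_skew br muB f ->
  is_lie_morph_to_skew br muA (h \o f).
Proof.
move=> [[hlin h_hom] hM] [[flin f_hom] f_br]; split; first split.
- exact: is_lin_comp.
- by move=> n x hx; rewrite -[n]addr0; apply/h_hom/f_hom.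
by move=> m n x y hx hy; rewrite /= (f_br m n) // /skew_br (linB hlin) (linZ hlin) !hM.
Qed.

Section Parity.
Variables (A : gmod K) (mu : A -> A -> A).
Hypothesis muA : is_gassoc mu.

Lemma parity_alg_morph : is_alg_morph mu mu (parity A).
Proof.
have [[muL muR] [mu_hom _]] := muA.
split; first split=> [|n x hx]; first exact: parity_lin.
  by rewrite addr0 (parity_hom hx); apply: homZ.
move=> x y; move: x; apply: eq_lin_hom => [||m x hx].
- exact: is_lin_comp (parity_lin A) (muL y).
- exact: is_lin_comp (muL _) (parity_lin A).
move: y; apply: eq_lin_hom => [||n y hy] /=.
- exact: is_lin_comp (parity_lin A) (muR x).
- exact: is_lin_comp (muR _) (parity_lin A).
rewrite (parity_hom (mu_hom _ _ _ _ hx hy)) (parity_hom hx) (parity_hom hy).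
by rewrite (linZ (muL _)) (linZ (muR _)) scalerA sgnD.
Qed.

Lemma leibniz_parityP (D : A -> A) : is_lin D ->
  (forall m x y, hom m x -> D (mu x y) = mu (D x) y + (-1) ^+ absz m *: mu x (D y))
  <-> (forall x y, D (mu x y) = mu (D x) y + mu (parity A x) (D y)).
Proof.
have [[muL muR] _] := muA.
move=> Dlin; split=> [Dleib x y | Dleib m x y hx]; last first.
  by rewrite Dleib (parity_hom hx) (linZ (muL _)).
move: x; apply: eq_lin_hom => [||m x hx].
- exact: is_lin_comp Dlin (muL y).
- exact: is_lin_add (is_lin_comp (muL _) Dlin) (is_lin_comp (muL _) (parity_lin A)).
by rewrite /= (Dleib m) // (parity_hom hx) (linZ (muL _)).
Qed.

End Parity.

Lemma parity_comm (A C : gmod K) (h : A -> C) :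
  deg_map 0 h -> forall x, h (parity A x) = parity C (h x).
Proof.
move=> [hlin h_hom]; apply: eq_lin_hom => [||m x hx].
- exact: is_lin_comp hlin (parity_lin A).
- exact: is_lin_comp (parity_lin C) hlin.
have hhx : hom m (h x) by rewrite -[m]addr0; apply: h_hom.
by rewrite /= (parity_hom hx) (parity_hom hhx) (linZ hlin).
Qed.

End AlgebraMorphisms.

Section TwistedDerivations.
Variable K : fieldType.

(* [S] carries the Koszul sign of the left factor: the parity operator for
   odd [D], the identity for even [D]. *)
Definition is_twisted_der (A C : gmod K) (muA : A -> A -> A)
    (muC : C -> C -> C) (h : A -> C) (S : C -> C) (k : int) (D : A -> C) :=
  deg_map k D /\ forall x y, D (muA x y) = muC (D x) (h y) + muC (S (h x)) (D y).

Section Along.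
Variables (A C : gmod K) (muA : A -> A -> A) (muC : C -> C -> C).
Variables (S : C -> C) (k : int).

Lemma alg_morph_sqz (h D : A -> C) :
  is_alg_morph muA muC h -> is_twisted_der muA muC h S k D ->
  is_alg_morph muA (@sqz_mul K C k muC S) (fun a => (h a, D a)).
Proof.
move=> [[hlin h_hom] hM] [[Dlin D_hom] DM]; split; first split.
- by move=> a u v; apply: injective_projections; rewrite /= ?hlin ?Dlin.
- by move=> n x hx; split=> /=; [apply: h_hom | rewrite addr0; apply: D_hom].
by move=> x y; apply: injective_projections; rewrite /= ?hM ?DM.
Qed.

Lemma sqz_alg_morphP (H : A -> sqz C k) :
  is_alg_morph muA (sqz_mul muC S) H ->
  is_alg_morph muA muC (fst \o H) /\ is_twisted_der muA muC (fst \o H) S k (snd \o H).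
Proof.
move=> [[Hlin H_hom] HM]; split; split; first split.
- by move=> a u v; rewrite /= Hlin.
- by move=> n x /H_hom [].
- by move=> x y; rewrite /= HM.
- split=> [a u v|n x /H_hom []]; first by rewrite /= Hlin.
  by rewrite addr0.
by move=> x y; rewrite /= HM.
Qed.

End Along.

Lemma twisted_der_compl (B C A : gmod K) (muB : B -> B -> B) (muC : C -> C -> C)
    (muA : A -> A -> A) (f : B -> C) (S : C -> C) (h : C -> A) (S' : A -> A)
    (k : int) (D : B -> C) :
  is_alg_morph muC muA h -> (forall x, h (S x) = S' (h x)) ->
  is_twisted_der muB muC f S k D -> is_twisted_der muB muA (h \o f) S' k (h \o D).
Proof.
move=> [[hlin h_hom] hM] hS [[Dlin D_hom] DM]; split; first split.
- exact: is_lin_comp.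
- by move=> n x hx; rewrite -[n + k]addr0; apply: h_hom; apply: D_hom.
by move=> x y; rewrite /= DM (linD hlin) !hM hS.
Qed.

Lemma twisted_der_compr (B A : gmod K) (muB : B -> B -> B) (muA : A -> A -> A)
    (h : B -> A) (S : A -> A) (k : int) (D : A -> A) :
  is_alg_morph muB muA h -> is_twisted_der muA muA id S k D ->
  is_twisted_der muB muA h S k (D \o h).
Proof.
move=> [[hlin h_hom] hM] [[Dlin D_hom] DM]; split; first split.
- exact: is_lin_comp.
- by move=> n x hx; apply: D_hom; rewrite -[n]addr0; apply: h_hom.
by move=> x y; rewrite /= hM DM.
Qed.

Lemma commutator_der (A : gmod K) (mu : A -> A -> A) (t : A) :
  is_gassoc mu -> hom (-2) t -> is_twisted_der mu mu id id (-2) (fun x => mu t x - mu x t).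
Proof.
move=> [[muL muR] [mu_hom muA]] ht; split; first split.
- exact: is_lin_sub (muR t) (muL t).
- by move=> n x hx; apply: homB; [rewrite addrC|]; apply: mu_hom.
by move=> x y; rewrite (linB (muL y)) (linB (muR x)) !muA addrA subrK.
Qed.

Lemma odd_der_sqr (A : gmod K) (mu : A -> A -> A) (D : A -> A) :
  is_gassoc mu -> deg_map (-1) D ->
  (forall m x y, hom m x -> D (mu x y) = mu (D x) y + (-1) ^+ absz m *: mu x (D y)) ->
  is_twisted_der mu mu id id (-2) (D \o D).
Proof.
move=> [[muL muR] _] [Dlin D_hom] DM; split; first split.
- exact: is_lin_comp.
- by move=> n x /D_hom/D_hom; rewrite -addrA.
move=> x y /=; move: x; apply: eq_lin_hom => [||m x hx] /=.
- exact: is_lin_comp Dlin (is_lin_comp Dlin (muL y)).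
- exact: is_lin_add (is_lin_comp (muL y) (is_lin_comp Dlin Dlin)) (muL _).
rewrite (DM m) // (linD Dlin) (DM (m - 1) _ _ (D_hom _ _ hx)) (linZ Dlin) (DM m) //.
by rewrite -!/(sgn _ _) sgn_pred scalerDr scalerA sgn_mul_self scale1r scaleNr addrA subrK.
Qed.

End TwistedDerivations.

Section PresentedAlgebra.
Variables (K : fieldType) (g : gmod K) (L : curved_lie g).
Variables (B : gmod K) (muB : B -> B -> B) (iota : g -> B).
Hypothesis HB : presents_Tbar_quotient L muB iota.

Lemma presented_gassoc : is_gassoc muB.
Proof. by case: HB. Qed.

Lemma presented_lie_morph : is_lie_morph_to_skew (lbr L) muB iota.
Proof. by case: HB => _ []. Qed.

Lemma presented_morph_eq (A : gmod K) (muA : A -> A -> A) (h1 h2 : B -> A) :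
  is_gassoc muA -> is_alg_morph muB muA h1 -> is_alg_morph muB muA h2 ->
  (forall x, h1 (iota x) = h2 (iota x)) -> h1 =1 h2.
Proof.
move=> muA_assoc h1M h2M eq_iota; have [_ [_ univ]] := HB.
have [_ uniq] := univ A muA muA_assoc _ (alg_morph_comp_lie h2M presented_lie_morph).
exact: uniq h1M h2M eq_iota (fun=> erefl).
Qed.

Lemma twisted_der_eq (A : gmod K) (muA : A -> A -> A) (h : B -> A) (S : A -> A)
    (k : int) (D1 D2 : B -> A) :
  is_gassoc muA -> is_alg_morph muA muA S -> is_alg_morph muB muA h ->
  is_twisted_der muB muA h S k D1 -> is_twisted_der muB muA h S k D2 ->
  (forall x, D1 (iota x) = D2 (iota x)) -> D1 =1 D2.
Proof.
move=> muA_assoc SM hM D1der D2der eq_iota b.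
have eq_on_iota x : (h (iota x), D1 (iota x)) = (h (iota x), D2 (iota x)).
  by rewrite eq_iota.
have := presented_morph_eq (sqz_gassoc k muA_assoc SM)
  (alg_morph_sqz hM D1der) (alg_morph_sqz hM D2der) eq_on_iota b.
by move/(congr1 snd).
Qed.

Lemma extend_derivation (d : g -> g) : deg_map (-1) d ->
  (forall m x y, hom m x -> d (lbr L x y) = lbr L (d x) y + (-1) ^+ absz m *: lbr L x (d y)) ->
  exists D, is_twisted_der muB muB id (parity B) (-1) D /\ forall x, D (iota x) = iota (d x).
Proof.
move=> [dlin d_hom] dM; have muB_assoc := presented_gassoc.
have [[muL _] _] := muB_assoc; have [[ilin i_hom] i_br] := presented_lie_morph.
have i_hom0 n x : hom n x -> hom n (iota x) by rewrite -{2}[n]addr0; apply: i_hom.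
pose f x : sqz B (-1) := (iota x, iota (d x)).
have fM : is_lie_morph_to_skew (lbr L) (sqz_mul muB (parity B)) f.
  split; first split.
  - by move=> a u v; apply: injective_projections; rewrite /= ?dlin ilin.
  - move=> n x hx; split=> /=; first exact: i_hom.
    by rewrite addr0; apply: i_hom0; apply: d_hom.
  move=> m n x y hx hy; apply: injective_projections; first exact: i_br.
  have hdx := d_hom _ _ hx; have hdy := d_hom _ _ hy.
  rewrite /= (dM m) // (linD ilin) (linZ ilin) (i_br _ _ _ _ hdx hy) (i_br _ _ _ _ hx hdy).
  rewrite /skew_br (parity_hom (i_hom0 _ _ hx)) (parity_hom (i_hom0 _ _ hy)).
  rewrite !(linZ (muL _)) ks_predl -(ks_predr K m n) -[(-1) ^+ _]/(sgn K m).
  rewrite scalerBr scalerDr !scalerA opprD !addrA [RHS]addrAC.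
  by congr (_ - _); rewrite addrAC.
have [_ [_ univ]] := HB.
have [[H [HM Hiota]] _] := univ _ _ (sqz_gassoc _ muB_assoc (parity_alg_morph muB_assoc)) f fM.
have [H1M H2der] := sqz_alg_morphP HM.
have H1_id : fst \o H =1 id.
  by apply: (presented_morph_eq muB_assoc H1M (alg_morph_id muB)) => x; rewrite /= Hiota.
exists (snd \o H); split; last by move=> x; rewrite /= Hiota.
have [D_deg DM] := H2der; by split=> // x y; rewrite DM !H1_id.
Qed.

End PresentedAlgebra.

Section CurvedEnvelope.
Variables (K : fieldType) (g : gmod K) (L : curved_lie g).
Variables (B : gmod K) (muB : B -> B -> B) (iota : g -> B).
Hypothesis HB : presents_Tbar_quotient L muB iota.
Variable dB : B -> B.
Hypothesis dB_der : is_twisted_der muB muB id (parity B) (-1) dB.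
Hypothesis dB_iota : forall x, dB (iota x) = iota (ld L x).

Let muB_assoc := presented_gassoc HB.
Let theta := iota (lth L).

Lemma presented_leibniz m x y : hom m x ->
  dB (muB x y) = muB (dB x) y + (-1) ^+ absz m *: muB x (dB y).
Proof.
by move: m x y; apply/(leibniz_parityP muB_assoc dB_der.1.1); case: dB_der.
Qed.

Lemma presented_curvature x : dB (dB x) = muB theta x - muB x theta.
Proof.
have [_ [_ [_ [_ [_ [_ [th_hom [ddE _]]]]]]]] := lax L.
have [[ilin i_hom] i_br] := presented_lie_morph HB.
have [[muL muR] _] := muB_assoc.
apply: (twisted_der_eq (D1 := dB \o dB) (D2 := fun x => muB theta x - muB x theta)
  HB muB_assoc (alg_morph_id muB) (alg_morph_id muB)).
- exact: odd_der_sqr muB_assoc dB_der.1 presented_leibniz.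
- exact: commutator_der muB_assoc (i_hom _ _ th_hom).
apply: eq_lin_hom => [||n {}x hx] /=.
- exact: is_lin_comp (is_lin_comp dB_der.1.1 dB_der.1.1) ilin.
- exact: is_lin_comp (is_lin_sub (muR _) (muL _)) ilin.
by rewrite !dB_iota ddE (i_br _ _ _ _ th_hom hx) /skew_br ks_N2l scale1r.
Qed.

Lemma presented_curved_assoc : is_curved_assoc muB dB theta.
Proof.
have [_ [_ [_ [_ [_ [_ [th_hom [_ dth]]]]]]]] := lax L.
have [[ilin i_hom] _] := presented_lie_morph HB.
split; first exact: muB_assoc.
split; first exact: dB_der.1.
split; first exact: presented_leibniz.
split; first by rewrite -[-2]addr0; apply: i_hom.
by split; [apply: presented_curvature | rewrite dB_iota dth (lin0 ilin)].
Qed.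

Lemma presented_curved_universal :
  forall (A : gmod K) (muA : A -> A -> A) (dA : A -> A) (thA : A),
  is_curved_assoc muA dA thA ->
  forall f : g -> A, is_curved_lie_morph_to_skew L muA dA thA f ->
  (exists h : B -> A, is_curved_assoc_morph muB dB theta muA dA thA h /\
                      forall x, h (iota x) = f x) /\
  (forall h1 h2 : B -> A,
     is_curved_assoc_morph muB dB theta muA dA thA h1 ->
     is_curved_assoc_morph muB dB theta muA dA thA h2 ->
     (forall x, h1 (iota x) = f x) -> (forall x, h2 (iota x) = f x) ->
     forall b, h1 b = h2 b).
Proof.
move=> A muA dA thA [muA_assoc [dA_deg [dA_leib _]]] f [f_lie [f_d f_th]].
have [_ [_ univ]] := HB; have [[h [hM h_iota]] h_uniq] := univ A muA muA_assoc f f_lie.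
split=> [|h1 h2 [h1M _] [h2M _]]; last exact: h_uniq.
exists h; split=> //; split=> //; split; last by rewrite /theta h_iota.
have dA_der : is_twisted_der muA muA id (parity A) (-1) dA.
  by split=> //; apply/(leibniz_parityP muA_assoc dA_deg.1).
apply: (twisted_der_eq (D1 := h \o dB) (D2 := dA \o h)
  HB muA_assoc (parity_alg_morph muA_assoc) hM).
- exact: twisted_der_compl hM (parity_comm hM.1) dB_der.
- exact: twisted_der_compr hM dA_der.
by move=> x; rewrite /= dB_iota !h_iota f_d.
Qed.

End CurvedEnvelope.

Theorem proposition3p13 (K : fieldType) (charK0 : [pchar K] =i pred0)
    (g : gmod K) (L : curved_lie g)
    (B : gmod K) (muB : B -> B -> B) (iota : g -> B)
    (HB : presents_Tbar_quotient L muB iota) :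
  exists dB : B -> B,
    (* dB is the derivation of B induced by d_g *)
    (forall x, dB (iota x) = iota (ld L x)) /\
    (* with curvature iota(theta), B is U(g): a universal arrow g -> Skew *)
    universal_arrow_to_Skew L muB dB (iota (lth L)) iota.
Proof.
have [_ [_ [_ [_ [d_deg [d_der _]]]]]] := lax L.
have [dB [dB_der dB_iota]] := extend_derivation HB d_deg d_der.
exists dB; split=> //; split; first exact: presented_curved_assoc.
split; last exact: (presented_curved_universal HB dB_der dB_iota).
by split; [exact: presented_lie_morph HB | split=> // x; rewrite dB_iota].
Qed.
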